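(* Let $A$ be a set, $I$ a set of labels, $\{\to_\alpha\mid\alpha\in I\}$ a family of binary relations on $A$ and $\{\vdash\!\dashv_\alpha\mid\alpha\in I\}$ a family of symmetric binary relations on $A$; put $\to=\bigcup_{\alpha}\to_\alpha$ and $\sim=(\bigcup_\alpha \vdash\!\dashv_\alpha)^*$. If the labeled ARS is peak-and-cliff decreasing, then it is Church–Rosser modulo $\sim$, i.e. $\Leftrightarrow^*\subseteq \to^*\cdot\sim\cdot\leftarrow^*$, where $\Leftrightarrow=\leftarrow\cup\to\cup\sim$.
   Context: For $J\subseteq I$ write $\to_J=\bigcup_{\gamma\in J}\to_\gamma$ and $\Leftrightarrow_J = \leftarrow_J\cup\to_J\cup\bigcup_{\gamma\in J}\vdash\!\dashv_\gamma$; $\leftarrow_\beta$ is the inverse of $\to_\beta$ and $R^=$ the reflexive closure. The labeled ARS is peak-and-cliff decreasing if there is a well-founded order $>$ on $I$ such that for all $\alpha,\beta\in I$: $\leftarrow_\alpha\cdot\to_\beta \subseteq (\Leftrightarrow_{\vee\alpha\beta})^*$ and $\leftarrow_\alpha\cdot\vdash\!\dashv_\beta\subseteq (\Leftrightarrow_{\vee\alpha})^*\cdot \leftarrow_\beta^{=}$, where $\vee\alpha\beta=\{\gamma\in I\mid \alpha>\gamma \text{ or } \beta>\gamma\}$ and $\vee\alpha=\vee\alpha\alpha$. *)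

From Stdlib Require Export Relations.

Section LARS.
Variables (A I : Type) (step : I -> relation A) (cliff : I -> relation A).

Definition stepJ (J : I -> Prop) : relation A :=
  fun x y => exists g, J g /\ step g x y.

Definition convJ (J : I -> Prop) : relation A :=
  fun x y => stepJ J y x \/ stepJ J x y \/ exists g, J g /\ cliff g x y.

Definition comp (R S : relation A) : relation A :=
  fun x z => exists y, R x y /\ S y z.

Definition reflc (R : relation A) : relation A :=
  fun x y => x = y \/ R x y.

Definition vee2 (gt : I -> I -> Prop) (a b : I) : I -> Prop :=
  fun g => gt a g \/ gt b g.
Definition vee1 (gt : I -> I -> Prop) (a : I) : I -> Prop := vee2 gt a a.

Definition wf_order (gt : I -> I -> Prop) : Prop :=
  (forall a, ~ gt a a) /\
  (forall a b c, gt a b -> gt b c -> gt a c) /\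
  well_founded (fun x y => gt y x).

Definition peak_and_cliff_decreasing : Prop :=
  exists gt : I -> I -> Prop, wf_order gt /\
    forall a b : I,
      inclusion A (comp (transp A (step a)) (step b))
                  (clos_refl_trans A (convJ (vee2 gt a b))) /\
      inclusion A (comp (transp A (step a)) (cliff b))
                  (comp (clos_refl_trans A (convJ (vee1 gt a)))
                        (reflc (transp A (step b)))).

Definition arrow : relation A := fun x y => exists a, step a x y.
Definition cliffU : relation A := fun x y => exists a, cliff a x y.
Definition simeq : relation A := clos_refl_trans A cliffU.
Definition conv : relation A := fun x y => arrow y x \/ arrow x y \/ simeq x y.

Definition church_rosser_modulo : Prop :=
  inclusion A (clos_refl_trans A conv)
    (comp (clos_refl_trans A arrow)
          (comp simeq (transp A (clos_refl_trans A arrow)))).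
End LARS.

(* Label every step of a conversion.  If all forward steps come before all cliffs and all
   cliffs before all backward steps, the conversion already has the shape ->* . ~ . <-*.
   Otherwise it contains an adjacent <- . ->, <- . |-| or |-| . ->; the last one, read
   backwards with its cliff reversed, is of the second kind.  Peak-and-cliff decreasingness replaces such a
   pair by a conversion whose multiset of labels is smaller in the multiset extension of >,
   which is well founded (Dershowitz–Manna), so the rewriting terminates. *)

From Stdlib Require Import List Permutation Wellfounded.
Import ListNotations.

Section MultisetOrder.
Variables (I : Type) (gt : I -> I -> Prop).

(* One step of the Dershowitz–Manna multiset extension of [gt], on lists up to permutation:
   one element [a] of [M] is replaced by finitely many elements below [a]. *)
Definition mult_red (N M : list I) : Prop :=
  exists a M0 K, Permutation M (a :: M0) /\ Permutation N (K ++ M0) /\ Forall (gt a) K.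

Lemma Acc_mult_red_perm M M' :
  Acc mult_red M -> Permutation M M' -> Acc mult_red M'.
Proof.
  intros HM HMM'; constructor; intros N (a & M0 & K & HM' & HN & HK).
  apply (Acc_inv HM); exists a, M0, K; split; [eapply perm_trans; eauto | auto].
Qed.

Lemma Permutation_cons_cons_inv (a c : I) M M1 :
  Permutation (a :: M) (c :: M1) ->
  (a = c /\ Permutation M M1) \/
  exists M2, Permutation M (c :: M2) /\ Permutation M1 (a :: M2).
Proof.
  intros HP; destruct (Permutation_vs_cons_inv HP) as ([| a' l1] & l2 & E);
    simpl in E; injection E as Ea EM; subst.
  - left; split; [reflexivity | exact (Permutation_cons_inv HP)].
  - right; exists (l1 ++ l2); split.
    + symmetry; apply Permutation_middle.
    + apply (Permutation_cons_app_inv (a' :: l1) l2 (a := c)); symmetry; exact HP.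
Qed.

Lemma Acc_mult_red_app_below a :
  (forall b, gt a b -> forall M, Acc mult_red M -> Acc mult_red (b :: M)) ->
  forall K, Forall (gt a) K -> forall M, Acc mult_red M -> Acc mult_red (K ++ M).
Proof. intros Hbelow K HK; induction HK; simpl; auto. Qed.

Lemma Acc_mult_red_cons_step a :
  (forall b, gt a b -> forall M, Acc mult_red M -> Acc mult_red (b :: M)) ->
  forall M, Acc mult_red M -> Acc mult_red (a :: M).
Proof.
  intros Hbelow M HM; induction HM as [M HM IH]; constructor.
  intros N (c & M1 & K & HaM & HN & HK).
  destruct (Permutation_cons_cons_inv _ _ _ _ HaM) as [[<- HMM1] | (M2 & HM2 & HM12)].
  - apply (Acc_mult_red_perm (K ++ M)).
    + apply (Acc_mult_red_app_below a Hbelow K HK); constructor; exact HM.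
    + rewrite HMM1; symmetry; exact HN.
  - apply (Acc_mult_red_perm (a :: K ++ M2)).
    + apply IH; exists c, M2, K; auto.
    + rewrite HN, HM12; apply Permutation_middle.
Qed.

Lemma Acc_mult_red_cons :
  well_founded (fun x y => gt y x) ->
  forall a M, Acc mult_red M -> Acc mult_red (a :: M).
Proof.
  intros gt_wf a; induction (gt_wf a) as [a _ IHa].
  apply Acc_mult_red_cons_step; exact IHa.
Qed.

Lemma mult_red_wf : well_founded (fun x y => gt y x) -> well_founded mult_red.
Proof.
  intros gt_wf M; induction M as [| a M IHM].
  - constructor; intros N (c & M1 & K & Hnil & _).
    apply Permutation_nil in Hnil; discriminate.
  - apply Acc_mult_red_cons; assumption.
Qed.

Lemma mult_red_replace a K X Y :
  Forall (gt a) K -> mult_red (X ++ K ++ Y) (X ++ a :: Y).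
Proof.
  intros HK; exists a, (X ++ Y), K; repeat split; auto.
  - symmetry; apply Permutation_middle.
  - apply Permutation_app_swap_app.
Qed.

Lemma mult_red_perm_l N N' M : mult_red N M -> Permutation N N' -> mult_red N' M.
Proof.
  intros (a & M0 & K & HM & HN & HK) HNN'; exists a, M0, K; repeat split; auto.
  rewrite <- HNN'; exact HN.
Qed.

Lemma mult_red_context X Y N M :
  mult_red N M -> mult_red (X ++ N ++ Y) (X ++ M ++ Y).
Proof.
  intros (a & M0 & K & HM & HN & HK); exists a, (X ++ M0 ++ Y), K; repeat split; auto.
  - rewrite HM; symmetry; apply Permutation_middle.
  - rewrite HN, !app_assoc; apply Permutation_app_tail, Permutation_app_tail, Permutation_app_comm.
Qed.

Local Notation mult_lt := (clos_trans (list I) mult_red).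

Lemma mult_lt_context X Y N M : mult_lt N M -> mult_lt (X ++ N ++ Y) (X ++ M ++ Y).
Proof.
  induction 1; [apply t_step, mult_red_context; assumption | eapply t_trans; eauto].
Qed.

Lemma mult_lt_below_pair a b K :
  Forall (fun g => gt a g \/ gt b g) K -> mult_lt K [a; b].
Proof.
  intros HK.
  assert (Hsplit : exists Ka Kb,
             Permutation K (Ka ++ Kb) /\ Forall (gt a) Ka /\ Forall (gt b) Kb).
  { induction HK as [| g K [Hg | Hg] _ (Ka & Kb & HKp & Ha & Hb)].
    - exists [], []; auto.
    - exists (g :: Ka), Kb; simpl; auto.
    - exists Ka, (g :: Kb); repeat split; auto.
      rewrite HKp; apply Permutation_middle. }
  destruct Hsplit as (Ka & Kb & HKp & Ha & Hb).
  apply t_trans with (a :: Kb); apply t_step.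
  - apply (mult_red_perm_l (Ka ++ Kb)); [| symmetry; exact HKp].
    exact (mult_red_replace a Ka [] Kb Ha).
  - rewrite <- (app_nil_r Kb); exact (mult_red_replace b Kb [a] [] Hb).
Qed.

End MultisetOrder.

Inductive kind := Fw | Bw | Cl.

Inductive misordered : kind -> kind -> Prop :=
| misordered_peak : misordered Bw Fw
| misordered_Bw_Cl : misordered Bw Cl
| misordered_Cl_Fw : misordered Cl Fw.

Lemma valley_shaped_or_misordered {I : Type} (L : list (kind * I)) :
  (exists KF KC KB, L = map (pair Fw) KF ++ map (pair Cl) KC ++ map (pair Bw) KB) \/
  exists P p q Q, L = P ++ p :: q :: Q /\ misordered (fst p) (fst q).
Proof.
  induction L as [| [k a] L [(KF & KC & KB & ->) | (P & p & q & Q & -> & Hpq)]].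
  - left; exists [], [], []; reflexivity.
  - destruct k.
    + left; exists (a :: KF), KC, KB; reflexivity.
    + destruct KF as [| b KF]; [destruct KC as [| b KC] |].
      * left; exists [], [], (a :: KB); reflexivity.
      * right; exists [], (Bw, a), (Cl, b), (map (pair Cl) KC ++ map (pair Bw) KB).
        split; [reflexivity | constructor].
      * right; exists [], (Bw, a), (Fw, b),
          (map (pair Fw) KF ++ map (pair Cl) KC ++ map (pair Bw) KB).
        split; [reflexivity | constructor].
    + destruct KF as [| b KF].
      * left; exists [], (a :: KC), KB; reflexivity.
      * right; exists [], (Cl, a), (Fw, b),
          (map (pair Fw) KF ++ map (pair Cl) KC ++ map (pair Bw) KB).
        split; [reflexivity | constructor].
  - right; exists ((k, a) :: P), p, q, Q; auto.
Qed.

Section LabeledConversions.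
Variables (A I : Type) (step cliff : I -> relation A).

Local Notation crt := (clos_refl_trans A).
Local Notation arrow := (arrow A I step).
Local Notation simeq := (simeq A I cliff).
Local Notation convJ := (convJ A I step cliff).

Definition lstep (p : kind * I) : relation A :=
  match p with
  | (Fw, a) => step a
  | (Bw, a) => transp A (step a)
  | (Cl, a) => cliff a
  end.

Inductive lconv : A -> A -> list (kind * I) -> Prop :=
| lconv_nil x : lconv x x []
| lconv_cons p x y z L : lstep p x y -> lconv y z L -> lconv x z (p :: L).

Lemma lconv_single p x y : lstep p x y -> lconv x y [p].
Proof. intros H; econstructor; [exact H | constructor]. Qed.

Lemma lconv_app x y z L1 L2 : lconv x y L1 -> lconv y z L2 -> lconv x z (L1 ++ L2).
Proof. intros H1 H2; induction H1; simpl; [exact H2 | econstructor; eauto]. Qed.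

Lemma lconv_app_inv x z L1 L2 :
  lconv x z (L1 ++ L2) -> exists y, lconv x y L1 /\ lconv y z L2.
Proof.
  revert x; induction L1 as [| p L1 IH]; intros x H.
  - exists x; split; [constructor | exact H].
  - inversion H as [| ? ? y ? ? Hp HL]; subst.
    destruct (IH _ HL) as (w & H1 & H2); exists w; split; [econstructor; eauto | exact H2].
Qed.

Definition lconvJ (J : I -> Prop) (x y : A) : Prop :=
  exists L, lconv x y L /\ Forall J (map snd L).

Lemma lconvJ_crt (J : I -> Prop) (R : relation A) :
  inclusion A R (lconvJ J) -> inclusion A (crt R) (lconvJ J).
Proof.
  intros HR x y H; induction H as [x y Hxy | x | x y z _ (L1 & H1 & F1) _ (L2 & H2 & F2)].
  - exact (HR x y Hxy).
  - exists []; split; constructor.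
  - exists (L1 ++ L2); split; [eapply lconv_app; eauto | rewrite map_app; apply Forall_app; auto].
Qed.

Lemma lconvJ_convJ (J : I -> Prop) : inclusion A (crt (convJ J)) (lconvJ J).
Proof.
  apply lconvJ_crt; intros x y [(g & Jg & H) | [(g & Jg & H) | (g & Jg & H)]].
  - exists [(Bw, g)]; split; [apply lconv_single; exact H | repeat constructor; exact Jg].
  - exists [(Fw, g)]; split; [apply lconv_single; exact H | repeat constructor; exact Jg].
  - exists [(Cl, g)]; split; [apply lconv_single; exact H | repeat constructor; exact Jg].
Qed.

Lemma lconv_of_conv x y : crt (conv A I step cliff) x y -> exists L, lconv x y L.
Proof.
  intros H.
  assert (Hconv : inclusion A (conv A I step cliff) (lconvJ (fun _ => True))).
  { intros u v [(g & Hg) | [(g & Hg) | Hsim]].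
    - exists [(Bw, g)]; split; [apply lconv_single; exact Hg | repeat constructor].
    - exists [(Fw, g)]; split; [apply lconv_single; exact Hg | repeat constructor].
    - revert u v Hsim; apply lconvJ_crt; intros u v (g & Hg).
      exists [(Cl, g)]; split; [apply lconv_single; exact Hg | repeat constructor]. }
  destruct (lconvJ_crt _ _ Hconv x y H) as (L & HL & _); exists L; exact HL.
Qed.

Definition valley : relation A := comp A (crt arrow) (comp A simeq (transp A (crt arrow))).

Lemma lconv_Fw x z K : lconv x z (map (pair Fw) K) -> crt arrow x z.
Proof.
  revert x; induction K as [| a K IH]; intros x H; inversion H as [| ? ? y ? ? Hs HK]; subst.
  - apply rt_refl.
  - apply rt_trans with y; [apply rt_step; exists a; exact Hs | exact (IH _ HK)].
Qed.

Lemma lconv_Cl x z K : lconv x z (map (pair Cl) K) -> simeq x z.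
Proof.
  revert x; induction K as [| a K IH]; intros x H; inversion H as [| ? ? y ? ? Hs HK]; subst.
  - apply rt_refl.
  - apply rt_trans with y; [apply rt_step; exists a; exact Hs | exact (IH _ HK)].
Qed.

Lemma lconv_Bw x z K : lconv x z (map (pair Bw) K) -> crt arrow z x.
Proof.
  revert x; induction K as [| a K IH]; intros x H; inversion H as [| ? ? y ? ? Hs HK]; subst.
  - apply rt_refl.
  - apply rt_trans with y; [exact (IH _ HK) | apply rt_step; exists a; exact Hs].
Qed.

Lemma lconv_valley_shaped x z KF KC KB :
  lconv x z (map (pair Fw) KF ++ map (pair Cl) KC ++ map (pair Bw) KB) -> valley x z.
Proof.
  intros H; apply lconv_app_inv in H as (u & HF & H); apply lconv_app_inv in H as (v & HC & HB).
  exists u; split; [exact (lconv_Fw _ _ _ HF) |].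
  exists v; split; [exact (lconv_Cl _ _ _ HC) | exact (lconv_Bw _ _ _ HB)].
Qed.

Hypothesis cliff_sym : forall a, symmetric A (cliff a).

Lemma crt_convJ_sym (J : I -> Prop) x y : crt (convJ J) x y -> crt (convJ J) y x.
Proof.
  induction 1 as [x y [H | [H | (g & Jg & H)]] | x | x y z _ IH1 _ IH2].
  - apply rt_step; right; left; exact H.
  - apply rt_step; left; exact H.
  - apply rt_step; right; right; exists g; split; [exact Jg | apply cliff_sym; exact H].
  - apply rt_refl.
  - eapply rt_trans; eauto.
Qed.

Variable gt : I -> I -> Prop.
Hypothesis gt_wf : well_founded (fun x y => gt y x).
Hypothesis peak_decreasing : forall a b,
  inclusion A (comp A (transp A (step a)) (step b)) (crt (convJ (vee2 I gt a b))).
Hypothesis cliff_decreasing : forall a b,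
  inclusion A (comp A (transp A (step a)) (cliff b))
    (comp A (crt (convJ (vee1 I gt a))) (reflc A (transp A (step b)))).

Local Notation mult_lt := (clos_trans (list I) (mult_red I gt)).

Definition smaller_conv (a b : I) (u v : A) : Prop :=
  exists K, lconv u v K /\ mult_lt (map snd K) [a; b].

Lemma vee1_vee2 a b g : vee1 I gt a g -> vee2 I gt a b g.
Proof. intros [H | H]; left; exact H. Qed.

Lemma vee1_gt a g : vee1 I gt a g -> gt a g.
Proof. intros [H | H]; exact H. Qed.

Lemma peak_smaller a b u y v : step a y u -> step b y v -> smaller_conv a b u v.
Proof.
  intros Ha Hb.
  destruct (lconvJ_convJ _ _ _ (peak_decreasing a b u v (ex_intro _ y (conj Ha Hb))))
    as (K & HK & FK).
  exists K; split; [exact HK | apply mult_lt_below_pair; exact FK].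
Qed.

Lemma Bw_Cl_smaller a b u y v : step a y u -> cliff b y v -> smaller_conv a b u v.
Proof.
  intros Ha Hb.
  destruct (cliff_decreasing a b u v (ex_intro _ y (conj Ha Hb))) as (w & Huw & [<- | Hvw]);
    destruct (lconvJ_convJ _ _ _ Huw) as (K & HK & FK).
  - exists K; split; [exact HK |].
    apply mult_lt_below_pair; eapply Forall_impl; [apply vee1_vee2 | exact FK].
  - exists (K ++ [(Bw, b)]); split; [eapply lconv_app; [exact HK | apply lconv_single; exact Hvw] |].
    rewrite map_app; apply t_step; apply (mult_red_replace I gt a _ [] [b]).
    eapply Forall_impl; [apply vee1_gt | exact FK].
Qed.

Lemma Cl_Fw_smaller a b u y v : cliff a u y -> step b y v -> smaller_conv a b u v.
Proof.
  intros Ha Hb.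
  destruct (cliff_decreasing b a v u (ex_intro _ y (conj Hb (cliff_sym _ _ _ Ha))))
    as (w & Hvw & [<- | Huw]);
    destruct (lconvJ_convJ _ _ _ (crt_convJ_sym _ _ _ Hvw)) as (K & HK & FK).
  - exists K; split; [exact HK |].
    apply mult_lt_below_pair; eapply Forall_impl; [| exact FK].
    intros g Hg; right; apply vee1_gt; exact Hg.
  - exists ((Fw, a) :: K); split; [econstructor; [exact Huw | exact HK] |].
    apply t_step; simpl; rewrite <- (app_nil_r (map snd K)).
    apply (mult_red_replace I gt b _ [a] []).
    eapply Forall_impl; [apply vee1_gt | exact FK].
Qed.

Lemma misordered_smaller p q u y v :
  misordered (fst p) (fst q) -> lstep p u y -> lstep q y v -> smaller_conv (snd p) (snd q) u v.
Proof.
  destruct p as [k1 a], q as [k2 b]; simpl; intros Hpq; inversion Hpq; subst; simpl.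
  - apply peak_smaller.
  - apply Bw_Cl_smaller.
  - apply Cl_Fw_smaller.
Qed.

Lemma lconv_valley L x z : lconv x z L -> valley x z.
Proof.
  remember (map snd L) as M eqn:HM; revert L x z HM.
  induction M as [M IH] using (well_founded_induction (wf_clos_trans _ _ (mult_red_wf I gt gt_wf))).
  intros L x z -> HL.
  destruct (valley_shaped_or_misordered L) as [(KF & KC & KB & ->) | (P & p & q & Q & -> & Hpq)].
  - exact (lconv_valley_shaped _ _ _ _ _ HL).
  - apply lconv_app_inv in HL as (u & HP & HL).
    inversion HL as [| ? ? y ? ? Hp HL1]; subst.
    inversion HL1 as [| ? ? v ? ? Hq HQ]; subst.
    destruct (misordered_smaller p q u y v Hpq Hp Hq) as (K & HK & Hlt).
    apply (IH (map snd (P ++ K ++ Q))) with (P ++ K ++ Q); [| reflexivity |].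
    + rewrite !map_app; exact (mult_lt_context I gt _ _ _ _ Hlt).
    + eapply lconv_app; [exact HP | eapply lconv_app; [exact HK | exact HQ]].
Qed.

End LabeledConversions.

Theorem theorem3p7 (A I : Type) (step : I -> relation A) (cliff : I -> relation A)
  (cliff_sym : forall a : I, symmetric A (cliff a)) :
  peak_and_cliff_decreasing A I step cliff ->
  church_rosser_modulo A I step cliff.
Proof.
  intros (gt & (_ & _ & gt_wf) & Hdecr) x y Hxy.
  destruct (lconv_of_conv A I step cliff x y Hxy) as (L & HL).
  exact (lconv_valley A I step cliff cliff_sym gt gt_wf
           (fun a b => proj1 (Hdecr a b)) (fun a b => proj2 (Hdecr a b)) L x y HL).
Qed.
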